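(* Let $R$ be a commutative ring with identity, let $S$ be an anti-Archimedean multiplicative subset of $R$, and let $M$ be a unitary $R$-module. Let $N=\{f\in R[X]\mid c(f)=R\}$. Then the following statements are equivalent: (1) $M$ is an $S$-Noetherian $R$-module; (2) $M[X]$ is an $S$-Noetherian $R[X]$-module; (3) $M[X]_N$ is an $S$-Noetherian $R[X]_N$-module.
   Context: A multiplicative subset $S$ of $R$ is not assumed saturated. $S$ is anti-Archimedean if for every $s\in S$, $\bigcap_{n\geq 1}s^nR\cap S\neq\emptyset$. For a unitary $R$-module $M$, a submodule $L$ of $M$ is $S$-finite if there exist $s\in S$ and a finitely generated submodule $F$ of $M$ with $Ls\subseteq F\subseteq L$; $M$ is $S$-Noetherian if every submodule of $M$ is $S$-finite. For $f\in R[X]$ the content ideal $c(f)$ is the ideal of $R$ generated by the coefficients of $f$; $N$ is a regular multiplicative subset of $R[X]$, and $M[X]_N$ is the localization of the $R[X]$-module $M[X]$ at $N$. In (2) and (3), $S$ is regarded as a multiplicative subset of $R[X]$, resp. $R[X]_N$, via the natural maps. *)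

From HB Require Import structures.
From mathcomp Require Import all_boot all_order all_algebra.
Set Implicit Arguments. Unset Strict Implicit. Unset Printing Implicit Defensive.
Import Order.TTheory GRing.Theory Num.Theory.
Local Open Scope ring_scope.

Record modData := ModData {
  sc_ty : Type;
  car : Type;
  veq : car -> car -> Prop;
  vzero : car;
  vadd : car -> car -> car;
  vscale : sc_ty -> car -> car }.

Section GenericModule.
Variable D : modData.

Definition submodule (L : car D -> Prop) : Prop :=
  [/\ (forall x y, veq x y -> L x -> L y),
      L (vzero D),
      (forall x y, L x -> L y -> L (vadd x y)) &
      (forall a x, L x -> L (vscale a x))].

Definition lincomb (a : seq (sc_ty D)) (F : seq (car D)) : car D :=
  foldr (@vadd D) (vzero D) (map (fun p => vscale p.1 p.2) (zip a F)).

Definition span (F : seq (car D)) (x : car D) : Prop :=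
  exists a, size a = size F /\ veq x (lincomb a F).

Definition fin_gen (G : car D -> Prop) : Prop :=
  submodule G /\ exists F : seq (car D), forall x, G x <-> span F x.

Definition S_finite (S : sc_ty D -> Prop) (L : car D -> Prop) : Prop :=
  exists s, exists G, [/\ S s, fin_gen G,
    (forall x, L x -> G (vscale s x)) & (forall x, G x -> L x)].

Definition S_Noetherian (S : sc_ty D -> Prop) : Prop :=
  forall L, submodule L -> S_finite S L.

End GenericModule.
Arguments S_Noetherian : clear implicits.
Arguments S_finite : clear implicits.

Definition multiplicative (R : comNzRingType) (S : R -> Prop) : Prop :=
  S 1 /\ forall s t, S s -> S t -> S (s * t).

Definition anti_archimedean (R : comNzRingType) (S : R -> Prop) : Prop :=
  forall s, S s -> exists t, S t /\ forall n : nat, (1 <= n)%N ->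
    exists r : R, t = s ^+ n * r.

Section Content.
Variable R : comNzRingType.

Definition content (f : {poly R}) (x : R) : Prop :=
  exists r : seq R, x = \sum_(i < size f) r`_i * f`_i.

Definition Nset (f : {poly R}) : Prop := forall x : R, content f x.

End Content.

Section Modules.
Variables (R : comNzRingType) (M : lmodType R).

Definition modM : modData :=
  @ModData R M (@eq M) 0 +%R (fun a x => a *: x).

(* M[X]: finitely supported coefficient sequences (coefficient i = p`_i) *)
Definition eqMX (p q : seq M) : Prop := forall i, p`_i = q`_i.
Definition addMX (p q : seq M) : seq M :=
  mkseq (fun i => p`_i + q`_i) (maxn (size p) (size q)).
Definition oppMX (p : seq M) : seq M := map -%R p.
Definition scaleMX (f : {poly R}) (p : seq M) : seq M :=
  mkseq (fun k => \sum_(i < k.+1) f`_i *: p`_(k - i)) (size f + size p).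

Definition modMX : modData :=
  @ModData {poly R} (seq M) eqMX [::] addMX scaleMX.

(* R[X]_N and M[X]_N as fractions; a denominator is a finite list of
   elements of N, standing for their product. *)
Definition denN := seq {f : {poly R} | Nset f}.
Definition denv (d : denN) : {poly R} := \prod_(u <- d) sval u.

Definition eqMXN (x y : seq M * denN) : Prop :=
  exists w : {poly R}, Nset w /\
    eqMX (scaleMX w (addMX (scaleMX (denv y.2) x.1)
                           (oppMX (scaleMX (denv x.2) y.1)))) [::].
Definition addMXN (x y : seq M * denN) : seq M * denN :=
  (addMX (scaleMX (denv y.2) x.1) (scaleMX (denv x.2) y.1), x.2 ++ y.2).
Definition scaleMXN (a : {poly R} * denN) (x : seq M * denN) :=
  (scaleMX a.1 x.1, a.2 ++ x.2).

Definition modMXN : modData :=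
  @ModData ({poly R} * denN) (seq M * denN) eqMXN ([::], [::])
           addMXN scaleMXN.

End Modules.

Definition S_in_poly (R : comNzRingType) (S : R -> Prop) (f : {poly R}) :=
  exists s, S s /\ f = s%:P.
Definition S_in_polyN (R : comNzRingType) (S : R -> Prop)
    (a : {poly R} * denN R) :=
  exists s, S s /\ a = (s%:P, [::]).

(* (2) => (1), (2) => (3) and (3) => (1) transport submodules: L |-> L[X] read off
   at the constant coefficient, L' |-> L' /\ M[X], and L |-> L[X]_N. The last one
   uses that a polynomial w of content R acts faithfully coefficientwise
   (m = sum_k r_k (w_k m)), and that c(f) = c(g) = R implies c(fg) = R.
   (1) => (2) is a Hilbert basis argument. For L <= M[X], the leading coefficients
   of elements of L of degree n form S-finite submodules J_n of M, and so does
   their union J. If s1 J lies in the span of leading coefficients of finitely many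
   elements of degree d of L, then s1^e f reduces to degree <= d modulo these,
   for every f in L of degree d + e; elements of degree <= d are handled by the
   finitely many J_n, n <= d. Since S is anti-Archimedean, one t in S is a
   multiple of every power of s1, which makes the bound uniform in e. *)

From Pilot Require Import Defs.
From HB Require Import structures.
From mathcomp Require Import all_boot all_order all_algebra.
From mathcomp Require Import zify ring.
From Stdlib Require Import FunctionalExtensionality.
From Stdlib Require List.
Set Implicit Arguments. Unset Strict Implicit. Unset Printing Implicit Defensive.
Import Order.TTheory GRing.Theory Num.Theory.
Local Open Scope ring_scope.
Local Notation span := Defs.span.
Local Notation submodule := Defs.submodule.
Local Notation multiplicative := Defs.multiplicative.

Section Convolution.
Variables (R : comNzRingType) (M : lmodType R).
Implicit Types (f g : {poly R}) (u v : nat -> M) (p q : seq M).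

Definition coefs p : nat -> M := fun k => p`_k.
Definition conv f u : nat -> M := fun k => \sum_(i < k.+1) f`_i *: u (k - i)%N.

Lemma coefs_nil : coefs [::] = (fun _ => 0).
Proof. by apply: functional_extensionality => k; rewrite /coefs nth_nil. Qed.

Lemma coefs_addMX p q : coefs (addMX p q) = coefs p \+ coefs q.
Proof.
apply: functional_extensionality => k; rewrite /coefs /addMX /=.
case: (ltnP k (maxn (size p) (size q))) => hk; first by rewrite nth_mkseq.
rewrite nth_default ?size_mkseq // !nth_default ?addr0 //.
  exact: leq_trans (leq_maxr _ _) hk.
exact: leq_trans (leq_maxl _ _) hk.
Qed.

Lemma coefs_oppMX p : coefs (oppMX p) = (fun k => - coefs p k).
Proof.
apply: functional_extensionality => k; rewrite /coefs /oppMX.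
case: (ltnP k (size p)) => hk; first by rewrite (nth_map 0).
by rewrite !nth_default ?size_map ?oppr0.
Qed.

Lemma coefs_scaleMX f p : coefs (scaleMX f p) = conv f (coefs p).
Proof.
apply: functional_extensionality => k; rewrite /coefs /scaleMX /conv.
case: (ltnP k (size f + size p)) => hk; first by rewrite nth_mkseq.
rewrite nth_default ?size_mkseq //; symmetry; apply: big1 => -[i /= hi] _.
case: (ltnP i (size f)) => hif; last by rewrite nth_default // scale0r.
rewrite [p`_ _]nth_default ?scaler0 //.
by rewrite leq_subRL //; apply: leq_trans hk; rewrite leq_add2r; exact: ltnW.
Qed.

Lemma nth_addMX p q k : (addMX p q)`_k = p`_k + q`_k.
Proof. by have := congr1 (fun u => u k) (coefs_addMX p q). Qed.

Lemma nth_scaleMX f p k : (scaleMX f p)`_k = conv f (coefs p) k.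
Proof. by have := congr1 (fun u => u k) (coefs_scaleMX f p). Qed.

Lemma eqMX_coefs p q : eqMX p q <-> coefs p = coefs q.
Proof.
split=> [h|h i]; first exact: functional_extensionality.
by have := congr1 (fun u => u i) h.
Qed.

Lemma conv0l u : conv 0 u = (fun _ => 0).
Proof.
by apply: functional_extensionality => k; apply: big1 => i _; rewrite coef0 scale0r.
Qed.

Lemma conv0r f : conv f (fun _ => 0) = (fun _ => 0).
Proof. by apply: functional_extensionality => k; apply: big1 => i _; rewrite scaler0. Qed.

Lemma convC c u : conv c%:P u = (fun k => c *: u k).
Proof.
apply: functional_extensionality => k.
rewrite /conv big_ord_recl /= coefC eqxx subn0 big1 ?addr0 // => i _.
by rewrite coefC scale0r.
Qed.

Lemma conv1 u : conv 1 u = u.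
Proof. by rewrite convC; apply: functional_extensionality => k; rewrite scale1r. Qed.

Lemma nth_scaleMXC c p k : (scaleMX c%:P p)`_k = c *: p`_k.
Proof. by rewrite nth_scaleMX convC. Qed.

Lemma convDl f g u : conv (f + g) u = conv f u \+ conv g u.
Proof.
apply: functional_extensionality => k; rewrite /conv /= -big_split /=.
by apply: eq_bigr => i _; rewrite coefD scalerDl.
Qed.

Lemma convDr f u v : conv f (u \+ v) = conv f u \+ conv f v.
Proof.
apply: functional_extensionality => k; rewrite /conv /= -big_split /=.
by apply: eq_bigr => i _; rewrite scalerDr.
Qed.

Lemma convNr f u : conv f (fun k => - u k) = (fun k => - conv f u k).
Proof.
apply: functional_extensionality => k; rewrite /conv /= -sumrN.
by apply: eq_bigr => i _; rewrite scalerN.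
Qed.

Lemma convM f g u : conv (f * g) u = conv f (conv g u).
Proof.
apply: functional_extensionality => k; rewrite /conv.
rewrite (eq_bigr (fun i : 'I_k.+1 => \sum_(j < k.+1)
   (if (j <= i)%N then f`_j *: (g`_(i - j) *: u (k - i)%N) else 0))); last first.
  move=> i _; rewrite coefM scaler_suml.
  rewrite (big_ord_widen_cond k.+1 (fun _ => true)
     (fun j => f`_j * g`_(i - j) *: u (k - i)%N)) ?(ltn_ord i) //.
  by rewrite big_mkcond /=; apply: eq_bigr => j _; rewrite scalerA.
rewrite exchange_big /=; apply: eq_bigr => -[j /= hj] _; rewrite scaler_sumr.
rewrite -(big_mkord xpredT
  (fun i => if (j <= i)%N then f`_j *: (g`_(i - j) *: u (k - i)%N) else 0)).
rewrite (big_cat_nat (leq0n j)) /=; last exact: ltnW.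
rewrite [X in X + _]big1_seq ?add0r; last first.
  move=> i; rewrite mem_index_iota => /andP[_ hi].
  by case: leqP => // h; move: (leq_trans hi h); rewrite ltnn.
rewrite -{1}(add0n j) big_addn big_mkord subSn //.
apply: eq_bigr => i _; rewrite leq_addl addnK; congr (_ *: (_ *: u _)).
by rewrite addnC subnDA.
Qed.

Lemma convAC f g u : conv f (conv g u) = conv g (conv f u).
Proof. by rewrite -!convM mulrC. Qed.

Lemma conv_polyXn j u k : conv 'X^j u k = if (j <= k)%N then u (k - j)%N else 0.
Proof.
rewrite /conv; case: ifP => hj.
  rewrite (bigD1 (Ordinal (hj : (j < k.+1)%N))) //= coefXn eqxx scale1r.
  rewrite big1 ?addr0 // => i hi; rewrite coefXn.
  case: eqP => [e|]; last by rewrite scale0r.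
  by case/eqP: hi; apply: val_inj.
apply: big1 => -[i /= hi] _; rewrite coefXn; case: eqP => [e|]; last by rewrite scale0r.
by move: hi; rewrite e ltnS hj.
Qed.

Lemma conv_seq1 f (m : M) k : conv f (coefs [:: m]) k = f`_k *: m.
Proof.
rewrite /conv big_ord_recr /= subnn big1 ?add0r // => i _.
have := ltn_ord i; rewrite -subn_gt0 /coefs; case: (k - i)%N => [//|n] _ /=.
by rewrite nth_nil scaler0.
Qed.

End Convolution.

(* The carriers of [modData] are modules only up to their relation [veq]
   (sequences differing by trailing zeros, equivalent fractions). *)
Record setoid_lmod (K : comNzRingType) (T : Type) (e : T -> T -> Prop) (z : T)
    (ad : T -> T -> T) (sc : K -> T -> T) : Prop := SetoidLmod {
  sm_refl : forall x, e x x;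
  sm_sym : forall {x y}, e x y -> e y x;
  sm_trans : forall {x y w}, e x y -> e y w -> e x w;
  sm_addE : forall {x x' y y'}, e x x' -> e y y' -> e (ad x y) (ad x' y');
  sm_scaleE : forall a {x x'}, e x x' -> e (sc a x) (sc a x');
  sm_addA : forall x y w, e (ad x (ad y w)) (ad (ad x y) w);
  sm_addC : forall x y, e (ad x y) (ad y x);
  sm_add0 : forall x, e (ad z x) x;
  sm_scaleDr : forall a x y, e (sc a (ad x y)) (ad (sc a x) (sc a y));
  sm_scaleDl : forall a b x, e (sc (a + b) x) (ad (sc a x) (sc b x));
  sm_scaleA : forall a b x, e (sc (a * b) x) (sc a (sc b x));
  sm_scale0 : forall x, e (sc 0 x) z;
  sm_scale1 : forall x, e (sc 1 x) x;
  sm_scaler0 : forall a, e (sc a z) z }.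

Section SetoidModule.
Variables (K : comNzRingType) (T : Type) (e : T -> T -> Prop) (z : T)
  (ad : T -> T -> T) (sc : K -> T -> T).
Hypothesis H : setoid_lmod e z ad sc.
Local Notation D := (ModData e z ad sc).
Implicit Types (F : seq T) (a : seq K).

Lemma lincomb_cons c a x F :
  lincomb (D:=D) (c :: a) (x :: F) = ad (sc c x) (lincomb (D:=D) a F).
Proof. by []. Qed.

Lemma lincomb_nil a : lincomb (D:=D) a [::] = z.
Proof. by case: a. Qed.

Lemma lincomb_nseq0 F : e (lincomb (D:=D) (nseq (size F) 0) F) z.
Proof.
elim: F => [|x F IH] /=; first exact: (sm_refl H).
rewrite lincomb_cons.
exact: (sm_trans H (sm_addE H (sm_scale0 H x) IH) (sm_add0 H z)).
Qed.

Lemma sm_addACA x y x' y' : e (ad (ad x y) (ad x' y')) (ad (ad x x') (ad y y')).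
Proof.
apply: (sm_trans H (sm_sym H (sm_addA H _ _ _))).
apply: (sm_trans H _ (sm_addA H _ _ _)); apply: (sm_addE H (sm_refl H _)).
apply: (sm_trans H (sm_addA H _ _ _)).
apply: (sm_trans H (sm_addE H (sm_addC H _ _) (sm_refl H _))).
exact: (sm_sym H (sm_addA H _ _ _)).
Qed.

Lemma lincomb_add a b F : size a = size F -> size b = size F ->
  e (ad (lincomb (D:=D) a F) (lincomb (D:=D) b F))
    (lincomb (D:=D) [seq p.1 + p.2 | p <- zip a b] F).
Proof.
elim: F a b => [|x F IH] [|c a] [|d b] //= ha hb; try discriminate.
  exact: (sm_add0 H _).
case: ha => ha; case: hb => hb; rewrite !lincomb_cons.
apply: (sm_trans H (sm_addACA _ _ _ _)).
exact: (sm_addE H (sm_sym H (sm_scaleDl H c d x)) (IH a b ha hb)).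
Qed.

Lemma lincomb_scale c a F :
  e (sc c (lincomb (D:=D) a F)) (lincomb (D:=D) [seq c * x | x <- a] F).
Proof.
elim: F a => [|x F IH] [|d a] /=; rewrite ?lincomb_nil; try exact: (sm_scaler0 H).
rewrite !lincomb_cons; apply: (sm_trans H (sm_scaleDr H _ _ _)).
exact: (sm_addE H (sm_sym H (sm_scaleA H _ _ _)) (IH a)).
Qed.

Lemma span_submodule F : submodule (span (D:=D) F).
Proof.
split.
- move=> x y hxy [a [ha hx]]; exists a; split => //.
  exact: (sm_trans H (sm_sym H hxy) hx).
- exists (nseq (size F) 0); rewrite size_nseq; split => //.
  exact: (sm_sym H (lincomb_nseq0 F)).
- move=> x y [a [ha hx]] [b [hb hy]].
  exists [seq p.1 + p.2 | p <- zip a b]; split.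
    by rewrite size_map size_zip ha hb minnn.
  exact: (sm_trans H (sm_addE H hx hy) (lincomb_add ha hb)).
- move=> c x [a [ha hx]]; exists [seq c * x | x <- a]; rewrite size_map.
  by split => //; exact: (sm_trans H (sm_scaleE H c hx) (lincomb_scale c a F)).
Qed.

Lemma span_eq F x y : e x y -> span (D:=D) F x -> span (D:=D) F y.
Proof. by case: (span_submodule F) => Se _ _ _; exact: Se. Qed.

Lemma span_add F x y :
  span (D:=D) F x -> span (D:=D) F y -> span (D:=D) F (ad x y).
Proof. by case: (span_submodule F) => _ _ Sa _; exact: Sa. Qed.

Lemma span_scale F c x : span (D:=D) F x -> span (D:=D) F (sc c x).
Proof. by case: (span_submodule F) => _ _ _ Ss; exact: Ss. Qed.

Lemma span_lincomb a F : size a = size F -> span (D:=D) F (lincomb (D:=D) a F).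
Proof. by move=> ha; exists a; split => //; exact: (sm_refl H). Qed.

Lemma span_In F x : List.In x F -> span (D:=D) F x.
Proof.
elim: F => [//|y F IH] /= [->|hx].
  exists (1 :: nseq (size F) 0); split; first by rewrite /= size_nseq.
  rewrite lincomb_cons; apply: (sm_sym H).
  apply: (sm_trans H (sm_addE H (sm_scale1 H _) (lincomb_nseq0 F))).
  exact: (sm_trans H (sm_addC H _ _) (sm_add0 H _)).
case: (IH hx) => a [ha h]; exists (0 :: a); split; first by rewrite /= ha.
rewrite lincomb_cons; apply: (sm_trans H h); apply: (sm_sym H).
exact: (sm_trans H (sm_addE H (sm_scale0 H _) (sm_refl H _)) (sm_add0 H _)).
Qed.

Lemma submodule_lincomb (P : T -> Prop) a F : submodule (D:=D) P ->
  (forall y, List.In y F -> P y) -> P (lincomb (D:=D) a F).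
Proof.
case=> _ P0 Pa Ps; elim: F a => [|y F IH] [|c a] hF //=; rewrite ?lincomb_nil //.
rewrite lincomb_cons; apply: Pa; first by apply: Ps; apply: hF; left.
by apply: IH => w hw; apply: hF; right.
Qed.

Lemma span_sub (P : T -> Prop) F x : submodule (D:=D) P ->
  (forall y, List.In y F -> P y) -> span (D:=D) F x -> P x.
Proof.
move=> hP hF [a [_ hx]]; case: (hP) => Pe _ _ _.
exact: Pe (sm_sym H hx) (submodule_lincomb a hP hF).
Qed.

Lemma span_catl F G x : span (D:=D) F x -> span (D:=D) (F ++ G) x.
Proof.
apply: span_sub; first exact: span_submodule.
by move=> y hy; apply: span_In; apply: List.in_or_app; left.
Qed.

Lemma span_catr F G x : span (D:=D) G x -> span (D:=D) (F ++ G) x.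
Proof.
apply: span_sub; first exact: span_submodule.
by move=> y hy; apply: span_In; apply: List.in_or_app; right.
Qed.

Lemma fin_gen_span F : fin_gen (span (D:=D) F).
Proof. by split; [exact: span_submodule | exists F]. Qed.

End SetoidModule.

Section Instances.
Variables (R : comNzRingType) (M : lmodType R).

Lemma setoid_lmodM : setoid_lmod (@eq M) 0 +%R (fun (a : R) (x : M) => a *: x).
Proof.
split.
- by [].
- by move=> x y ->.
- by move=> x y w -> ->.
- by move=> x x' y y' -> ->.
- by move=> a x x' ->.
- by move=> *; rewrite addrA.
- by move=> *; rewrite addrC.
- by move=> *; rewrite add0r.
- by move=> *; rewrite scalerDr.
- by move=> *; rewrite scalerDl.
- by move=> *; rewrite scalerA.
- by move=> *; rewrite scale0r.
- by move=> *; rewrite scale1r.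
- by move=> *; rewrite scaler0.
Qed.

Lemma setoid_lmodMX : setoid_lmod (@eqMX R M) [::] (@addMX R M) (@scaleMX R M).
Proof.
split=> [x|x y|x y w|x x' y y'|a x x'|x y w|x y|x|a x y|a b x|a b x|x|x|a];
  rewrite ?eqMX_coefs ?(coefs_addMX, coefs_scaleMX, coefs_nil).
- by [].
- by move=> ->.
- by move=> -> ->.
- by move=> -> ->.
- by move=> ->.
- by apply: functional_extensionality => k /=; rewrite addrA.
- by apply: functional_extensionality => k /=; rewrite addrC.
- by apply: functional_extensionality => k /=; rewrite add0r.
- by rewrite convDr.
- by rewrite convDl.
- by rewrite convM.
- by rewrite conv0l.
- by rewrite conv1.
- by rewrite conv0r.
Qed.

End Instances.

Section Content.
Variable R : comNzRingType.
Implicit Types (f g : {poly R}) (J : R -> Prop) (a x : R).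

Definition ideal J :=
  [/\ J 0, (forall x y, J x -> J y -> J (x + y)) & (forall c x, J x -> J (c * x))].

Definition ideal_addr J a x := exists c, J (x - c * a).

Definition comax_content J f :=
  exists (m : nat) (r : nat -> R), J (1 - \sum_(i < m) r i * f`_i).

Lemma idealB J x y : ideal J -> J x -> J y -> J (x - y).
Proof. by case=> _ hD hM hx hy; rewrite -mulN1r; apply: hD hx (hM _ _ hy). Qed.

Lemma ideal_sum J n (F : 'I_n -> R) :
  ideal J -> (forall i, J (F i)) -> J (\sum_(i < n) F i).
Proof. by case=> h0 hD _ hF; apply: big_ind. Qed.

Lemma ideal_addr_ideal J a : ideal J -> ideal (ideal_addr J a).
Proof.
case=> h0 hD hM; split.
- by exists 0; rewrite mul0r subr0.
- move=> x y [c hc] [d hd]; exists (c + d).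
  by have := hD _ _ hc hd; rewrite mulrDl opprD addrACA.
- move=> c x [d hd]; exists (c * d).
  by have := hM c _ hd; rewrite mulrBr mulrA.
Qed.

Lemma ideal1_of_subr_pow J x N : ideal J -> J (1 - x) -> J (x ^+ N) -> J 1.
Proof.
case=> _ hD hM h1 hN; rewrite -(subrK (x ^+ N) 1); apply: hD hN.
by rewrite -{1}(expr1n _ N) subrXX mulrC; apply: hM.
Qed.

(* With a0 = f_0:
   a0^(j+1) g_j = a0^j (f g)_j - sum_(i < j) a0^i f_(i+1) (a0^(j-i) g_(j-i-1)). *)
Lemma ideal_coef0_exp_mul J f g : ideal J -> (forall k, J (f * g)`_k) ->
  forall j, J (f`_0 ^+ j.+1 * g`_j).
Proof.
move=> hJ hfg; have [_ _ hM] := hJ.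
elim/ltn_ind => j IHj.
have hj := hM (f`_0 ^+ j) _ (hfg j).
rewrite coefM big_ord_recl /= subn0 mulrDr in hj.
suff hrest : J (f`_0 ^+ j * \sum_(i < j) f`_(bump 0 i) * g`_(j - bump 0 i)).
  by have := idealB hJ hj hrest; rewrite addrK mulrA -exprSr.
rewrite mulr_sumr; apply: ideal_sum => // i.
have hi : (j - bump 0 i < j)%N by have := ltn_ord i; rewrite /bump /=; lia.
have := hM (f`_0 ^+ i * f`_(bump 0 i)) _ (IHj _ hi).
set k := (j - bump 0 i)%N.
have e : j = (i + k.+1)%N by have := ltn_ord i; rewrite /k /bump /=; lia.
have -> : f`_0 ^+ j = f`_0 ^+ i * f`_0 ^+ k.+1 by rewrite -exprD -e.
by congr J; ring.
Qed.

Lemma ideal_coef0_exp J f g : ideal J -> (forall k, J (f * g)`_k) ->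
  comax_content J g -> exists N, J (f`_0 ^+ N).
Proof.
move=> hJ hfg [m [r hg]]; have [_ hD hM] := hJ; exists m.
have -> : f`_0 ^+ m = f`_0 ^+ m * (1 - \sum_(i < m) r i * g`_i)
    + \sum_(i < m) r i * (f`_0 ^+ m * g`_i).
  rewrite mulrBr mulr1 mulr_sumr.
  rewrite [X in _ + X](eq_bigr (fun i : 'I_m => f`_0 ^+ m * (r i * g`_i))) ?subrK //.
  by move=> i _; ring.
apply: hD; first exact: (hM).
apply: ideal_sum => // i; apply: (hM).
have e : m = ((m - i.+1) + i.+1)%N by have := ltn_ord i; lia.
have -> : f`_0 ^+ m = f`_0 ^+ (m - i.+1) * f`_0 ^+ i.+1 by rewrite -exprD -e.
by rewrite -mulrA; apply: hM; apply: ideal_coef0_exp_mul.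
Qed.

Lemma poly_drop1 f : f = drop_poly 1 f * 'X + (f`_0)%:P.
Proof.
apply/polyP => i; rewrite coefD coefMX coefC coef_drop_poly.
by case: i => [|i] /=; rewrite ?add0r ?addr0 ?addn1.
Qed.

(* Induction on size f: modulo J + a0 R, with a0 = f_0, the polynomial f
   becomes f / X, so 1 = j + c a0 with j in J; as some a0^N lies in J, so does 1. *)
Lemma comax_content_mul J f g : ideal J -> (forall k, J (f * g)`_k) ->
  comax_content J f -> comax_content J g -> J 1.
Proof.
elim: {f}(size f) {-2}f (leqnn (size f)) J => [|n IH] f hs J hJ hfg hf hg.
  have f0 : f = 0 by apply/eqP; rewrite -size_poly_eq0 -leqn0.
  case: hf => m [r]; rewrite f0 big1 ?subr0 // => i _; by rewrite coef0 mulr0.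
have [N hN] := ideal_coef0_exp hJ hfg hg.
set a0 := f`_0 in hN; set f1 := drop_poly 1 f.
have [c hc] : ideal_addr J a0 1.
  apply: (IH f1 _ _ (ideal_addr_ideal a0 hJ)).
  - by rewrite size_drop_poly; lia.
  - move=> k; exists (- g`_k.+1).
    have := hfg k.+1; rewrite {1}(poly_drop1 f) mulrDl coefD mulrAC coefMX coefCM /=.
    by rewrite mulNr opprK [_ * a0]mulrC.
  - case: hf => -[|m] [r hf].
      by exists 0%N, r, 0; rewrite mul0r subr0 big_ord0; rewrite big_ord0 in hf.
    exists m, (fun i => r i.+1), (r 0).
    suff -> : 1 - \sum_(i < m) r i.+1 * f1`_i - r 0 * a0
            = 1 - \sum_(i < m.+1) r i * f`_i by [].
    rewrite big_ord_recl opprD addrA [RHS]addrAC; congr (_ - _ - _).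
    by apply: eq_bigr => i _; rewrite coef_drop_poly addn1.
  - by case: hg => m [r hg]; exists m, r, 0; rewrite mul0r subr0.
apply: (ideal1_of_subr_pow (x := c * a0) (N := N) hJ) => //.
by rewrite exprMn; case: hJ => _ _; apply.
Qed.

Lemma Nset1 : Nset (1 : {poly R}).
Proof. by move=> x; exists [:: x]; rewrite size_poly1 big_ord1 coefC mulr1. Qed.

Lemma Nset_content1 f : content f 1 -> Nset f.
Proof.
case=> r hr x; exists [seq x * y | y <- r].
transitivity (x * 1); first by rewrite mulr1.
rewrite [in LHS]hr mulr_sumr; apply: eq_bigr => i _.
case: (ltnP i (size r)) => hi; first by rewrite (nth_map 0) // mulrA.
rewrite (nth_default _ hi) (nth_default 0 (s:=[seq x * y | y <- r])) ?size_map //.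
by rewrite !mul0r mulr0.
Qed.

Lemma NsetM f g : Nset f -> Nset g -> Nset (f * g).
Proof.
move=> hf hg; apply: Nset_content1.
pose J x := exists r : nat -> R, x = \sum_(i < size (f * g)) r i * (f * g)`_i.
have hJ : ideal J.
  split.
  - by exists (fun _ => 0); rewrite big1 // => i _; rewrite mul0r.
  - move=> x y [r ->] [r' ->]; exists (fun i => r i + r' i).
    by rewrite -big_split; apply: eq_bigr => i _; rewrite mulrDl.
  - move=> c x [r ->]; exists (fun i => c * r i).
    by rewrite mulr_sumr; apply: eq_bigr => i _; rewrite mulrA.
have hcomax h : Nset h -> comax_content J h.
  case/(_ 1) => r hr; exists (size h), (fun i => r`_i).
  by rewrite -hr subrr; case: hJ.
have [r ->] : J 1.
  apply: (comax_content_mul hJ _ (hcomax _ hf) (hcomax _ hg)) => k.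
  case: (ltnP k (size (f * g))) => hk; last first.
    by exists (fun _ => 0); rewrite nth_default // big1 // => i _; rewrite mul0r.
  exists (fun i => if i == k then 1 else 0).
  rewrite (bigD1 (Ordinal hk)) //= eqxx mul1r big1 ?addr0 // => i hi.
  by rewrite ifN ?mul0r //; apply: contra hi => /eqP e; apply/eqP/val_inj.
by exists (mkseq r (size (f * g))); apply: eq_bigr => i _; rewrite nth_mkseq.
Qed.

Lemma Nset_prod (I : Type) (s : seq I) (F : I -> {poly R}) :
  (forall i, List.In i s -> Nset (F i)) -> Nset (\prod_(i <- s) F i).
Proof.
elim: s => [|i s IH] hs; first by rewrite big_nil; exact: Nset1.
rewrite big_cons; apply: NsetM; first by apply: hs; left.
by apply: IH => j hj; apply: hs; right.
Qed.

End Content.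

Section Localization.
Variables (R : comNzRingType) (M : lmodType R).
Implicit Types (w : {poly R}) (p q : seq M) (d : denN R).
Local Notation frac := (seq M * denN R)%type.
Implicit Types (x y : frac).

Lemma Nset_denv d : Nset (denv d).
Proof. by apply: Nset_prod => -[u hu]. Qed.

Lemma denv_cat d d' : denv (d ++ d') = denv d * denv d'.
Proof. by rewrite /denv big_cat. Qed.

Lemma denv_nil : denv ([::] : denN R) = 1.
Proof. by rewrite /denv big_nil. Qed.

Lemma eqMXN_conv x y : eqMXN x y <-> exists w, Nset w /\
  conv (w * denv y.2) (coefs x.1) = conv (w * denv x.2) (coefs y.1).
Proof.
rewrite /eqMXN; split=> -[w [hw h]]; exists w; split => //; move: h.
  rewrite eqMX_coefs coefs_scaleMX coefs_addMX coefs_oppMX !coefs_scaleMX coefs_nil.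
  rewrite convDr convNr -!convM => h; apply: functional_extensionality => k.
  by apply/eqP; rewrite -subr_eq0; apply/eqP; have := congr1 (fun u => u k) h.
rewrite eqMX_coefs coefs_scaleMX coefs_addMX coefs_oppMX !coefs_scaleMX coefs_nil.
rewrite convDr convNr -!convM => ->.
by apply: functional_extensionality => k /=; rewrite subrr.
Qed.

Lemma eqMXN_of_conv x y :
  conv (denv y.2) (coefs x.1) = conv (denv x.2) (coefs y.1) -> eqMXN x y.
Proof.
by move=> h; apply/eqMXN_conv; exists 1; rewrite !mul1r; split=> //; exact: Nset1.
Qed.

Lemma eqMXN_refl x : eqMXN x x.
Proof. exact: eqMXN_of_conv. Qed.

Lemma eqMXN_sym x y : eqMXN x y -> eqMXN y x.
Proof. by move/eqMXN_conv => [w [hw h]]; apply/eqMXN_conv; exists w. Qed.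

Lemma eqMXN_trans x y z : eqMXN x y -> eqMXN y z -> eqMXN x z.
Proof.
move/eqMXN_conv => [w1 [hw1 h1]] /eqMXN_conv [w2 [hw2 h2]]; apply/eqMXN_conv.
exists (w1 * w2 * denv y.2); split; first by do 2?apply: NsetM => //; exact: Nset_denv.
have e1 := congr1 (conv (w2 * denv z.2)) h1.
have e2 := congr1 (conv (w1 * denv x.2)) h2.
rewrite -!convM in e1 e2.
have -> : w1 * w2 * denv y.2 * denv z.2 = w2 * denv z.2 * (w1 * denv y.2) by ring.
have -> : w1 * w2 * denv y.2 * denv x.2 = w1 * denv x.2 * (w2 * denv y.2) by ring.
rewrite e1 -e2; congr conv; ring.
Qed.

Lemma eqMXN_pair p q d d' : denv d = denv d' -> eqMX p q -> eqMXN (p, d) (q, d').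
Proof. by move=> hd /eqMX_coefs hpq; apply: eqMXN_of_conv; rewrite /= hd hpq. Qed.

Lemma coefs_addMXN x y :
  coefs (addMXN x y).1 = conv (denv y.2) (coefs x.1) \+ conv (denv x.2) (coefs y.1).
Proof. by rewrite /= coefs_addMX !coefs_scaleMX. Qed.

Lemma addMXN_eql x x' y : eqMXN x x' -> eqMXN (addMXN x y) (addMXN x' y).
Proof.
move/eqMXN_conv => [w [hw h]]; apply/eqMXN_conv; exists w; split => //.
rewrite !coefs_addMXN /= !denv_cat !convDr -!convM.
congr (_ \+ _); last by congr conv; ring.
rewrite (_ : w * (denv x'.2 * denv y.2) * denv y.2
           = denv y.2 * denv y.2 * (w * denv x'.2)); last by ring.
by rewrite convM h -convM; congr conv; ring.
Qed.

Lemma addMXN_eqr x y y' : eqMXN y y' -> eqMXN (addMXN x y) (addMXN x y').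
Proof.
move/eqMXN_conv => [w [hw h]]; apply/eqMXN_conv; exists w; split => //.
rewrite !coefs_addMXN /= !denv_cat !convDr -!convM.
congr (_ \+ _); first by congr conv; ring.
rewrite (_ : w * (denv x.2 * denv y'.2) * denv x.2
           = denv x.2 * denv x.2 * (w * denv y'.2)); last by ring.
by rewrite convM h -convM; congr conv; ring.
Qed.

Lemma scaleMXN_eq a x x' : eqMXN x x' -> eqMXN (scaleMXN a x) (scaleMXN a x').
Proof.
move/eqMXN_conv => [w [hw h]]; apply/eqMXN_conv; exists w; split => //.
rewrite /= !coefs_scaleMX !denv_cat -!convM.
rewrite (_ : w * (denv a.2 * denv x'.2) * a.1
           = a.1 * denv a.2 * (w * denv x'.2)); last by ring.
by rewrite convM h -convM; congr conv; ring.
Qed.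

End Localization.

Section Extension.
Variables (R : comNzRingType) (M : lmodType R).
Local Notation frac := (seq M * denN R)%type.
Implicit Types (P : seq M -> Prop) (F : seq frac) (a : seq ({poly R} * denN R)).

Definition locN P (x : frac) := exists q d, P q /\ eqMXN x (q, d).

Lemma locN_submodule P : submodule (D:=modMX M) P -> submodule (D:=modMXN M) (locN P).
Proof.
case=> _ P0 Pa Ps; split.
- move=> x y hxy [q [d [hq h]]]; exists q, d; split => //.
  exact: eqMXN_trans (eqMXN_sym hxy) h.
- by exists [::], [::]; split => //; exact: eqMXN_refl.
- move=> x y [q [d [hq hx]]] [q' [d' [hq' hy]]].
  exists (addMXN (q, d) (q', d')).1, (addMXN (q, d) (q', d')).2; split.
    by apply: (Pa); apply: (Ps).
  apply: eqMXN_trans (addMXN_eql y hx) _.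
  by rewrite -surjective_pairing; exact: addMXN_eqr.
- move=> a x [q [d [hq hx]]].
  exists (scaleMXN a (q, d)).1, (scaleMXN a (q, d)).2; split; first exact: (Ps).
  by rewrite -surjective_pairing; exact: scaleMXN_eq.
Qed.

Lemma lincombN_cons c a x F :
  lincomb (D:=modMXN M) (c :: a) (x :: F)
  = addMXN (scaleMXN c x) (lincomb (D:=modMXN M) a F).
Proof. by []. Qed.

Lemma lincombN_numer P a F : submodule (D:=modMX M) P ->
  (forall y, List.In y F -> P y.1) -> P (lincomb (D:=modMXN M) a F).1.
Proof.
case=> _ P0 Pa Ps; elim: F a => [|y F IH] [|c a] hF //.
rewrite lincombN_cons /=; apply: (Pa); apply: (Ps).
  by apply: (Ps); apply: hF; left.
by apply: IH => z hz; apply: hF; right.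
Qed.

Lemma lincombN_eq a F F' : List.Forall2 (@eqMXN R M) F F' ->
  eqMXN (lincomb (D:=modMXN M) a F) (lincomb (D:=modMXN M) a F').
Proof.
move=> hF; elim: hF a => [|x x' F0 F0' hx _ IH] [|c a]; try exact: eqMXN_refl.
rewrite !lincombN_cons; apply: eqMXN_trans (addMXN_eql _ (scaleMXN_eq c hx)) _.
exact: addMXN_eqr.
Qed.

Lemma spanN_eq F F' x : List.Forall2 (@eqMXN R M) F F' ->
  span (D:=modMXN M) F x -> span (D:=modMXN M) F' x.
Proof.
move=> hF [a [ha hx]]; exists a; split; first by rewrite ha; exact: List.Forall2_length hF.
exact: eqMXN_trans hx (lincombN_eq a hF).
Qed.

Lemma lincombN_zero F :
  coefs (lincomb (D:=modMXN M) (nseq (size F) (0, [::])) F).1 = (fun _ => 0).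
Proof.
elim: F => [|x F IH]; first by rewrite /lincomb /= coefs_nil.
rewrite [nseq _ _]/= lincombN_cons /= coefs_addMX !coefs_scaleMX.
move: IH; case: (lincomb _ _) => Z1 Z2 /= ->.
by rewrite conv0l !conv0r; apply: functional_extensionality => k /=; rewrite addr0.
Qed.

Lemma spanN_In F y : List.In y F -> span (D:=modMXN M) F y.
Proof.
elim: F => [//|x F IH] /= [<-|hy].
  exists ((1, [::]) :: nseq (size F) (0, [::])); split; first by rewrite /= size_nseq.
  rewrite lincombN_cons; have := lincombN_zero F.
  case: (lincomb _ _) => Z1 Z2 /= hZ; apply: eqMXN_of_conv.
  rewrite /= coefs_addMX !coefs_scaleMX hZ conv0r conv1 denv_cat convM.
  by congr conv; apply: functional_extensionality => k /=; rewrite addr0.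
case: (IH hy) => a [ha h]; exists ((0, [::]) :: a); split; first by rewrite /= ha.
rewrite lincombN_cons; case: (lincomb _ _) h => Q1 Q2.
move=> /eqMXN_conv [w [hw h]]; apply/eqMXN_conv; exists w; split => //.
rewrite /= coefs_addMX !coefs_scaleMX conv0l conv0r denv_cat.
have -> : (fun=> 0) \+ conv (denv x.2) (coefs Q1) = conv (denv x.2) (coefs Q1).
  by apply: functional_extensionality => k /=; rewrite add0r.
rewrite (_ : w * (denv x.2 * denv Q2) = denv x.2 * (w * denv Q2)); last by ring.
by rewrite convM h -!convM; congr conv; ring.
Qed.

Lemma spanN_of_spanMX (F : seq (seq M)) q d : span (D:=modMX M) F q ->
  span (D:=modMXN M) [seq (p, [::] : denN R) | p <- F] (q, d).
Proof.
case=> b [hb hq]; elim: F b q hb hq => [|p F IH] [|c b] q //= hb hq.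
  exists [::]; split => //; apply: eqMXN_of_conv.
  by move/eqMX_coefs: hq => /= ->; rewrite /lincomb /= coefs_nil !conv0r.
case: hb => hb.
have [a [ha /eqMXN_conv [w [hw h]]]] := IH b _ hb (sm_refl (setoid_lmodMX M) _).
set Q := lincomb (D:=modMXN M) a _ in h.
exists ((c, d) :: a); split; first by rewrite /= ha.
rewrite lincombN_cons; apply/eqMXN_conv; exists w; split => //.
move/eqMX_coefs: hq; rewrite lincomb_cons coefs_addMX coefs_scaleMX => ->.
rewrite /= coefs_addMX !coefs_scaleMX !denv_cat denv_nil mulr1 !convDr.
congr (_ \+ _); first by rewrite -!convM; congr conv; ring.
move: h => /= h.
rewrite -!convM (_ : w * (denv d * denv Q.2) = denv d * (w * denv Q.2)); last by ring.
by rewrite convM h -convM; congr conv; ring.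
Qed.

End Extension.

Lemma choice_Forall2 (A B : Type) (P : A -> B -> Prop) (Q : B -> Prop) (l : seq A) :
  (forall x, List.In x l -> exists2 y, P x y & Q y) ->
  exists2 l', List.Forall2 P l l' & forall y, List.In y l' -> Q y.
Proof.
elim: l => [|x l IH] hl; first by exists [::].
have [y hxy hy] := hl x (or_introl erefl).
have [l' hll' hl'] := IH (fun z hz => hl z (or_intror hz)).
by exists (y :: l') => [|z /= [<-|hz]]; [constructor | | apply: hl'].
Qed.

Section CoefficientSubmodules.
Variables (R : comNzRingType) (M : lmodType R).
Implicit Types (L : M -> Prop) (p : seq M).

Definition coefwise L p := forall k, L p`_k.

Lemma submodule_sum L n (G : 'I_n -> M) : submodule (D:=modM M) L ->
  (forall i, L (G i)) -> L (\sum_(i < n) G i).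
Proof. by case=> _ L0 La _ hG; apply: big_ind. Qed.

Lemma coefwise_submodule L : submodule (D:=modM M) L ->
  submodule (D:=modMX M) (coefwise L).
Proof.
move=> hL; case: (hL) => _ L0 La Ls; split.
- by move=> x y hxy hx k; rewrite -(hxy k).
- by move=> k; rewrite nth_nil.
- by move=> x y hx hy k; rewrite nth_addMX; apply: La.
- move=> a x hx k; rewrite nth_scaleMX; apply: submodule_sum => // i.
  by apply: Ls; exact: hx.
Qed.

Lemma coefwise_seq1 L m : submodule (D:=modM M) L -> L m -> coefwise L [:: m].
Proof. by case=> _ L0 _ _ hm [|k] //=; rewrite nth_nil. Qed.

Lemma coefwise_In L p m : coefwise L p -> List.In m p -> L m.
Proof.
elim: p => [//|x p IH] hp /= [<-|hm]; first exact: hp 0%N.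
exact: IH (fun k => hp k.+1) hm.
Qed.

Lemma coefwise_of_In L p : L 0 -> (forall m, List.In m p -> L m) -> coefwise L p.
Proof.
move=> L0; elim: p => [|x p IH] hp [|k] /=; rewrite ?nth_nil //.
  by apply: hp; left.
by apply: IH => m hm; apply: hp; right.
Qed.

Lemma lincombMX_coef0 (a : seq {poly R}) (F : seq (seq M)) :
  (lincomb (D:=modMX M) a F)`_0
  = lincomb (D:=modM M) [seq f`_0 | f : {poly R} <- a] [seq p`_0 | p <- F].
Proof.
elim: F a => [|x F IH] [|c a] //=.
rewrite lincomb_cons nth_addMX nth_scaleMX IH.
by rewrite /conv big_ord1.
Qed.

(* Write 1 = sum_k r_k w_k. *)
Lemma submodule_Nset_scale L w m : submodule (D:=modM M) L ->
  Nset w -> (forall k, L (w`_k *: m)) -> L m.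
Proof.
move=> hL hw hk; case: (hw 1) => r hr.
have -> : m = \sum_(i < size w) r`_i *: (w`_i *: m).
  by rewrite -[m in LHS]scale1r hr scaler_suml; apply: eq_bigr => i _; rewrite scalerA.
by apply: submodule_sum => // i; case: hL => _ _ _ Ls; exact: Ls.
Qed.

End CoefficientSubmodules.

Section Transfer.
Variables (R : comNzRingType) (M : lmodType R) (S : R -> Prop).

Lemma S_Noetherian_M_of_MX :
  S_Noetherian (modMX M) (S_in_poly S) -> S_Noetherian (modM M) S.
Proof.
move=> h2 L hL.
have [_ [G [[s [hs ->]] [_ [F hF]] hLG hGL]]] := h2 _ (coefwise_submodule hL).
exists s, (span (D:=modM M) [seq p`_0 | p <- F]); split => //.
- exact: fin_gen_span (setoid_lmodM M) _.
- move=> m hm; have /hF [a [ha he]] := hLG _ (coefwise_seq1 hL hm).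
  exists [seq f`_0 | f : {poly R} <- a]; split; first by rewrite !size_map.
  by have := he 0%N; rewrite lincombMX_coef0 nth_scaleMXC.
- move=> x; apply: (span_sub (setoid_lmodM M) hL) => y /List.in_map_iff [p [<- hp]].
  exact: hGL _ ((hF p).2 (span_In (setoid_lmodMX M) hp)) 0%N.
Qed.

Lemma S_Noetherian_MXN_of_MX :
  S_Noetherian (modMX M) (S_in_poly S) -> S_Noetherian (modMXN M) (S_in_polyN S).
Proof.
move=> h2 L' hL'; case: (hL') => L'e L'0 L'a L's.
pose L p := L' (p, [::] : denN R).
have hL : submodule (D:=modMX M) L.
  split.
  - by move=> p q hpq; apply: L'e; exact: eqMXN_pair.
  - exact: L'0.
  - move=> p q hp hq; apply: L'e (L'a _ _ hp hq); apply: eqMXN_pair => //.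
    by apply/eqMX_coefs; rewrite /= !coefs_addMX !coefs_scaleMX denv_nil !conv1.
  - by move=> a p; apply: (L's (a, [::])).
have [_ [G [[s [hs ->]] [hG [F hF]] hLG hGL]]] := h2 _ hL.
pose FN := [seq (p, [::] : denN R) | p <- F].
exists (s%:P, [::]), (locN G); split; first by exists s.
- split; first exact: locN_submodule.
  exists FN => x; split.
    case=> q [d [/hF hq hx]]; have [a [ha hxa]] := spanN_of_spanMX d hq.
    by exists a; split => //; exact: eqMXN_trans hx hxa.
  case=> a [ha hx]; exists (lincomb a FN).1, (lincomb a FN).2.
  rewrite -surjective_pairing; split => //.
  apply: lincombN_numer hG _ => y /List.in_map_iff [p [<- hp]].
  exact/hF/(span_In (setoid_lmodMX M)).
- case=> p d hx; exists (scaleMX s%:P p), d; split; last exact: eqMXN_refl.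
  apply: hLG; apply: L'e (L's (denv d, [::]) _ hx); apply: eqMXN_of_conv.
  by rewrite /= denv_nil conv1 coefs_scaleMX.
- move=> x [q [d [hq hx]]]; apply: L'e (L's (1, d) _ (hGL _ hq)).
  apply: eqMXN_trans (eqMXN_sym hx); apply: eqMXN_of_conv.
  by rewrite /= coefs_scaleMX conv1 denv_cat denv_nil mulr1.
Qed.

(* Clear the denominators of the generators, then use that a polynomial of
   content R acts faithfully on coefficients. *)
Lemma S_Noetherian_M_of_MXN :
  S_Noetherian (modMXN M) (S_in_polyN S) -> S_Noetherian (modM M) S.
Proof.
move=> h3 L hL; have hLX := coefwise_submodule hL.
have [_ [G [[s [hs ->]] [_ [F hF]] hLG hGL]]] := h3 _ (locN_submodule hLX).
have [F' hFF' hF'L] : exists2 F', List.Forall2 (@eqMXN R M) F F'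
    & forall y, List.In y F' -> coefwise L y.1.
  apply: choice_Forall2 => y hy.
  by have /hF /hGL [q [d [hq hyq]]] := spanN_In hy; exists (q, d).
pose F0 := List.flat_map fst F'.
have hspanM := span_submodule (setoid_lmodM M) F0.
exists s, (span (D:=modM M) F0); split => //.
- exact: fin_gen_span (setoid_lmodM M) _.
- move=> m hm.
  have /hLG /hF : locN (coefwise L) ([:: m], [::]).
    by exists [:: m], [::]; split; [exact: coefwise_seq1 | exact: eqMXN_refl].
  move=> /(spanN_eq hFF') [a [_]].
  set Q := lincomb _ _ => /eqMXN_conv [w [hw he]].
  have hQ : coefwise (span (D:=modM M) F0) Q.1.
    apply: lincombN_numer (coefwise_submodule hspanM) _ => y hy.
    apply: coefwise_of_In; first by case: hspanM.
    move=> m' hm'; apply: (span_In (setoid_lmodM M)).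
    by apply/List.in_flat_map; exists y.
  apply: (submodule_Nset_scale hspanM (w := w * denv Q.2)) => [|k].
    by apply: NsetM => //; exact: Nset_denv.
  have := congr1 (fun u => u k) he.
  rewrite /= coefs_scaleMX convAC convC conv_seq1 denv_nil mulr1.
  rewrite scalerA [s * _]mulrC -scalerA => ->; rewrite -nth_scaleMX.
  by case: (coefwise_submodule hspanM) => _ _ _; apply.
- move=> x; apply: (span_sub (setoid_lmodM M) hL) => m /List.in_flat_map [y [hy hm]].
  exact: coefwise_In (hF'L y hy) hm.
Qed.

End Transfer.

Lemma Forall2_eq_map (A B : Type) (g : B -> A) (l : seq A) (l' : seq B) :
  List.Forall2 (fun x y => x = g y) l l' -> l = map g l'.
Proof. by elim=> //= x y {}l {}l' -> _ ->. Qed.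

Section Reduction.
Variables (R : comNzRingType) (M : lmodType R).
Implicit Types (p f : seq M) (fs : seq (seq M)) (cs : seq R).

Definition deg_lt n p := forall k, (n <= k)%N -> p`_k = 0.

Definition shift_comb e cs fs :=
  lincomb (D:=modMX M) [seq c%:P * 'X^e | c <- cs] fs.

Definition reduce p c e cs fs :=
  addMX (scaleMX c%:P p) (scaleMX (-1)%:P (shift_comb e cs fs)).

Lemma lincombM_eq0 cs (F : seq M) : (forall y, List.In y F -> y = 0) ->
  lincomb (D:=modM M) cs F = 0.
Proof.
elim: F cs => [|y F IH] [|c cs] hF //.
rewrite lincomb_cons IH ?(hF y (or_introl erefl)) ?scaler0 ?addr0 //.
by move=> z hz; apply: hF; right.
Qed.

Lemma nth_shift_comb e cs fs k : (shift_comb e cs fs)`_k =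
  if (e <= k)%N then lincomb (D:=modM M) cs [seq f`_(k - e) | f <- fs] else 0.
Proof.
elim: fs cs => [|f fs IH] [|c cs] /=; try by rewrite nth_nil; case: ifP.
rewrite /shift_comb /= lincomb_cons lincomb_cons nth_addMX nth_scaleMX -/(shift_comb _ _ _).
rewrite IH convM convC conv_polyXn.
by case: ifP => _; rewrite ?scaler0 ?addr0.
Qed.

Lemma span_shift_comb e cs fs : size cs = size fs ->
  span (D:=modMX M) fs (shift_comb e cs fs).
Proof. by move=> hs; apply: (span_lincomb (setoid_lmodMX M)); rewrite size_map. Qed.

Lemma nth_reduce p c e cs fs k :
  c *: p`_k = (reduce p c e cs fs)`_k + (shift_comb e cs fs)`_k.
Proof. by rewrite nth_addMX !nth_scaleMXC scaleN1r subrK. Qed.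

Lemma reduce_in (L : seq M -> Prop) p c e cs fs : submodule (D:=modMX M) L ->
  L p -> (forall f, List.In f fs -> L f) -> L (reduce p c e cs fs).
Proof.
move=> hL hp hfs; case: (hL) => _ _ La Ls.
apply: La; first exact: Ls.
by apply: Ls; exact: submodule_lincomb _ hL hfs.
Qed.

Lemma deg_lt_reduce p c d e cs fs : deg_lt (d + e).+1 p ->
  (forall f, List.In f fs -> deg_lt d.+1 f) ->
  c *: p`_(d + e) = lincomb (D:=modM M) cs [seq f`_d | f <- fs] ->
  deg_lt (d + e) (reduce p c e cs fs).
Proof.
move=> hp hfs htop k hk; rewrite nth_addMX !nth_scaleMXC nth_shift_comb.
have -> : (e <= k)%N by apply: leq_trans hk; exact: leq_addl.
case: (ltnP (d + e) k) => hk2.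
  rewrite hp // scaler0 add0r lincombM_eq0 ?scaler0 // => y /List.in_map_iff [f [<- hf]].
  by apply: hfs => //; move: hk2; lia.
have -> : k = (d + e)%N by apply/eqP; rewrite eqn_leq hk hk2.
by rewrite htop addnK scaleN1r subrr.
Qed.

End Reduction.

Section HilbertBasis.
Variables (R : comNzRingType) (M : lmodType R) (S : R -> Prop).
Hypotheses (hSm : multiplicative S) (hM : S_Noetherian (modM M) S).
Variable L : seq M -> Prop.
Hypothesis hL : submodule (D:=modMX M) L.
Implicit Types (f h : seq M) (fs : seq (seq M)).

Definition lcoef n (m : M) := exists f, [/\ L f, deg_lt n.+1 f & f`_n = m].

Definition lcoefs (m : M) := exists n, lcoef n m.

Lemma lcoef_submodule n : submodule (D:=modM M) (lcoef n).
Proof.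
case: hL => _ L0 La Ls; split.
- by move=> x y /= ->.
- by exists [::]; split => // [k _|]; rewrite nth_nil.
- move=> x y [f [hf bf <-]] [g [hg bg <-]]; exists (addMX f g); split.
  + exact: La.
  + by move=> k hk; rewrite nth_addMX bf ?bg ?addr0.
  + by rewrite nth_addMX.
- move=> a x [f [hf bf <-]]; exists (scaleMX a%:P f); split.
  + exact: Ls.
  + by move=> k hk; rewrite nth_scaleMXC bf ?scaler0.
  + by rewrite nth_scaleMXC.
Qed.

Lemma lcoef_shift n j m : lcoef n m -> lcoef (n + j) m.
Proof.
case=> f [hf bf hm]; exists (scaleMX 'X^j f); split.
- by case: hL => _ _ _ Ls; apply: Ls.
- move=> k hk; rewrite nth_scaleMX conv_polyXn; case: ifP => // hjk.
  by apply: bf; move: hk hjk; lia.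
- by rewrite nth_scaleMX conv_polyXn leq_addl addnK.
Qed.

Lemma lcoefs_submodule : submodule (D:=modM M) lcoefs.
Proof.
split.
- by move=> x y /= ->.
- by exists 0%N; case: (lcoef_submodule 0).
- move=> x y [n hx] [n' hy]; exists (n + n')%N.
  case: (lcoef_submodule (n + n')) => _ _ Ja _; apply: Ja; first exact: lcoef_shift.
  by rewrite addnC; exact: lcoef_shift.
- by move=> a x [n hx]; exists n; case: (lcoef_submodule n) => _ _ _; apply.
Qed.

Lemma lcoef_common_deg (A : seq M) : (forall a, List.In a A -> lcoefs a) ->
  exists d, forall a, List.In a A -> lcoef d a.
Proof.
elim: A => [|a A IH] hA; first by exists 0%N.
have [n hn] := hA a (or_introl erefl).
have [d hd] := IH (fun b hb => hA b (or_intror hb)).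
exists (n + d)%N => b /= [<-|hb]; first exact: lcoef_shift.
by rewrite addnC; apply: lcoef_shift; apply: hd.
Qed.

Lemma lift_lcoefs d (A : seq M) : (forall a, List.In a A -> lcoef d a) ->
  exists2 fs, (forall f, List.In f fs -> L f /\ deg_lt d.+1 f)
            & A = [seq f`_d | f <- fs].
Proof.
move=> hA; have [fs hAfs hfs] : exists2 fs,
    List.Forall2 (fun a f => a = f`_d) A fs
    & forall f, List.In f fs -> L f /\ deg_lt d.+1 f.
  by apply: choice_Forall2 => a /hA [f [hf bf <-]]; exists f.
by exists fs => //; exact: Forall2_eq_map hAfs.
Qed.

(* Induction on n: the S-finiteness of lcoef n lets us cancel the
   coefficient of degree n. *)
Lemma S_finite_deg_lt n : exists s hs, [/\ S s, (forall h, List.In h hs -> L h) &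
   forall h, L h -> deg_lt n h -> span (D:=modMX M) hs (scaleMX s%:P h)].
Proof.
elim: n => [|n [s' [hs' [hS' hs'L hspan']]]].
  exists 1, [::]; split => [||h _ bh] //; first by case: hSm.
  exists [::]; split => // k.
  by rewrite nth_scaleMXC bh // nth_nil scaler0.
have [sn [G [hsn [_ [B hB]] hJG hGJ]]] := hM (lcoef_submodule n).
have [fs hfs eB] : exists2 fs, (forall f, List.In f fs -> L f /\ deg_lt n.+1 f)
    & B = [seq f`_n | f <- fs].
  by apply: lift_lcoefs => b hb; apply/hGJ/hB; exact: (span_In (setoid_lmodM M)).
exists (s' * sn), (hs' ++ fs); split.
- by case: hSm => _; apply.
- move=> h hh; case: (List.in_app_or _ _ _ hh) => {}hh.
    exact: hs'L.
  exact: (hfs h hh).1.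
move=> h hh bh.
have /hJG /hB [cs [hcs hcsB]] : lcoef n h`_n by exists h.
have bh' : deg_lt (n + 0) (reduce h sn 0 cs fs).
  apply: deg_lt_reduce => [||]; rewrite ?addn0 //; first by move=> f /hfs [].
  by rewrite -eB.
rewrite addn0 in bh'.
have hred := hspan' _ (reduce_in sn 0 cs hL hh (fun f hf => (hfs f hf).1)) bh'.
apply: (span_eq (setoid_lmodMX M) (x := addMX (scaleMX s'%:P (reduce h sn 0 cs fs))
     (scaleMX s'%:P (shift_comb 0 cs fs)))).
  by move=> k; rewrite nth_addMX !nth_scaleMXC -scalerDr -nth_reduce scalerA.
apply: (span_add (setoid_lmodMX M)); first exact: (span_catl (setoid_lmodMX M)).
apply: (span_catr (setoid_lmodMX M)); apply: (span_scale (setoid_lmodMX M)).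
by apply: span_shift_comb; rewrite hcs eB size_map.
Qed.

(* Each step cancels the top coefficient at the price of one factor s1. *)
Lemma reduce_deg s1 d fs : (forall f, List.In f fs -> L f /\ deg_lt d.+1 f) ->
  (forall m, lcoefs m -> span (D:=modM M) [seq f`_d | f <- fs] (s1 *: m)) ->
  forall e f, L f -> deg_lt (d + e).+1 f -> exists g h,
    [/\ span (D:=modMX M) fs g, L h, deg_lt d.+1 h &
        eqMX (scaleMX (s1 ^+ e)%:P f) (addMX g h)].
Proof.
move=> hfs hlc; elim=> [|e IH] f hf bf.
  exists [::], f; split => //.
  - by case: (span_submodule (setoid_lmodMX M) fs).
  - by rewrite -(addn0 d).
  - by move=> k; rewrite nth_scaleMXC expr0 scale1r nth_addMX nth_nil add0r.
have [cs [hcs htop]] : span (D:=modM M) [seq f`_d | f <- fs] (s1 *: f`_(d + e.+1)).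
  by apply: hlc; exists (d + e.+1)%N, f.
have bf' := deg_lt_reduce bf (fun y hy => (hfs y hy).2) htop.
rewrite addnS in bf'.
have [g [h [hg hh bh heq]]] :=
  IH _ (reduce_in s1 e.+1 cs hL hf (fun y hy => (hfs y hy).1)) bf'.
exists (addMX g (scaleMX (s1 ^+ e)%:P (shift_comb e.+1 cs fs))), h; split => //.
- apply: (span_add (setoid_lmodMX M)) => //; apply: (span_scale (setoid_lmodMX M)).
  by apply: span_shift_comb; rewrite hcs size_map.
- move=> k; have := heq k; rewrite !nth_addMX !nth_scaleMXC => e1.
  rewrite exprSr -scalerA (nth_reduce f s1 e.+1 cs fs k) scalerDr e1.
  by rewrite -!addrA [h`_k + _]addrC.
Qed.

Lemma S_finite_polyMod : anti_archimedean S -> S_finite (modMX M) (S_in_poly S) L.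
Proof.
move=> hSa.
have [s1 [G [hs1 [_ [A hA]] hJG hGJ]]] := hM lcoefs_submodule.
have [d hd] : exists d, forall a, List.In a A -> lcoef d a.
  by apply: lcoef_common_deg => a ha; apply/hGJ/hA; exact: (span_In (setoid_lmodM M)).
have [fs hfs eA] := lift_lcoefs hd.
have [s' [hs [hs' hsL hspan]]] := S_finite_deg_lt d.+1.
have [t [ht htn]] := hSa s1 hs1.
exists (t * s')%:P, (span (D:=modMX M) (fs ++ hs)); split.
- by exists (t * s'); split => //; case: hSm => _; apply.
- exact: (fin_gen_span (setoid_lmodMX M)).
- move=> f hf; pose e := (size f).+1.
  have bf : deg_lt (d + e).+1 f.
    by move=> k hk; apply: nth_default; exact: ltnW (leq_trans (leq_addl d _) (ltnW hk)).
  have hlc m : lcoefs m -> span (D:=modM M) [seq f`_d | f <- fs] (s1 *: m).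
    by move=> hm; rewrite -eA; apply/hA/hJG.
  have [g [h [hg hh bh heq]]] := reduce_deg hfs hlc hf bf.
  have [r hr] := htn e isT.
  apply: (span_eq (setoid_lmodMX M)
    (x := addMX (scaleMX (r * s')%:P g) (scaleMX r%:P (scaleMX s'%:P h)))).
    move=> k; have := heq k; rewrite !nth_addMX !nth_scaleMXC => e1.
    rewrite hr (_ : s1 ^+ e * r * s' = r * s' * s1 ^+ e); last by ring.
    by rewrite -[RHS]scalerA e1 scalerDr !scalerA.
  apply: (span_add (setoid_lmodMX M)).
    by apply: (span_catl (setoid_lmodMX M)); apply: (span_scale (setoid_lmodMX M)).
  apply: (span_catr (setoid_lmodMX M)); apply: (span_scale (setoid_lmodMX M)).
  exact: hspan.
- move=> x; apply: (span_sub (setoid_lmodMX M)) => // y hy.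
  case: (List.in_app_or _ _ _ hy) => {}hy; [exact: (hfs y hy).1 | exact: hsL].
Qed.

End HilbertBasis.

Lemma S_Noetherian_MX_of_M (R : comNzRingType) (M : lmodType R) (S : R -> Prop) :
  multiplicative S -> anti_archimedean S ->
  S_Noetherian (modM M) S -> S_Noetherian (modMX M) (S_in_poly S).
Proof. by move=> hSm hSa hM L hL; exact: S_finite_polyMod. Qed.

Theorem theorem2p6 (R : comNzRingType) (S : R -> Prop) (M : lmodType R) :
  multiplicative S -> anti_archimedean S ->
  (S_Noetherian (modM M) S <-> S_Noetherian (modMX M) (S_in_poly S)) /\
  (S_Noetherian (modMX M) (S_in_poly S) <->
   S_Noetherian (modMXN M) (S_in_polyN S)).
Proof.
move=> hSm hSa; have h12 := S_Noetherian_MX_of_M hSm hSa.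
split; split.
- exact: h12.
- exact: S_Noetherian_M_of_MX.
- exact: S_Noetherian_MXN_of_MX.
- by move=> h3; apply: h12; exact: S_Noetherian_M_of_MXN.
Qed.
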